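(* Let $p(x)$ be a distribution on $\mathbb{R}^n$, $f_\theta:\mathbb{R}^n\to\mathcal{S}^{d-1}$ an encoder, $\tau>0$ a temperature and $t^->0$. For a query $x$ define $$\pi^-_\theta(x^-\mid x)=\frac{e^{-t^-\|f_\theta(x)-f_\theta(x^-)\|_2^2}\,p(x^-)}{\int e^{-t^-\|f_\theta(x)-f_\theta(x')\|_2^2}\,p(x')\,dx'},$$ the mutual information $$I(X;X^-)=\mathbb{E}_{x\sim p(x)}\mathbb{E}_{x^-\sim\pi^-_\theta(\cdot\mid x)}\Big[\ln\frac{\pi^-_\theta(x^-\mid x)}{p(x^-)}\Big],$$ the contrastive repulsion loss $$\mathcal{L}_{\mathrm{CR}}=\mathbb{E}_{x\sim p(x)}\mathbb{E}_{x^-\sim\pi^-_\theta(\cdot\mid x)}\big[-c(f_\theta(x),f_\theta(x^-))\big]\quad\text{with } c(z_1,z_2)=-z_1^\top z_2/\tau,$$ and the uniformity loss $$\mathcal{L}_{\mathrm{uniform}}=\mathbb{E}_{x\sim p(x)}\Big[\ln\mathbb{E}_{x^-\sim p(x^-)}e^{f_\theta(x^-)^\top f_\theta(x)/\tau}\Big].$$ Then $$\mathcal{L}_{\mathrm{uniform}}+I(X;X^-)\ \geqslant\ \mathcal{L}_{\mathrm{CR}}.$$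
   Context: $\mathcal{L}_{\mathrm{uniform}}$ is the limit, as the number $M$ of negative samples tends to infinity, of the contribution of the negative samples to the standard contrastive (InfoNCE) loss $\mathbb{E}\big[-\ln\frac{e^{f_\theta(x)^\top f_\theta(x^+)/\tau}}{e^{f_\theta(x)^\top f_\theta(x^+)/\tau}+\sum_{i=1}^M e^{f_\theta(x_i^-)^\top f_\theta(x)/\tau}}\big]$ (after subtracting $\ln M$), where negatives $x_i^-$ are drawn i.i.d. from $p$ independently of the query $x$. *)

From HB Require Import structures.
From mathcomp Require Import all_boot all_order all_algebra.
From mathcomp Require Import all_classical all_reals all_analysis.
Import numFieldTopology.Exports.
Set Implicit Arguments. Unset Strict Implicit. Unset Printing Implicit Defensive.
Import Order.TTheory GRing.Theory Num.Theory.
Local Open Scope ring_scope.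

Definition Rn (R : realType) (n : nat) :=
  g_sigma_algebraType (open : set (set 'M[R]_(1, n))).

Section defs.
Variables (R : realType) (n d : nat).

Definition dotv (u v : 'rV[R]_d) : R := \sum_(i < d) u 0 i * v 0 i.
Definition sqdist (u v : 'rV[R]_d) : R := \sum_(i < d) (u 0 i - v 0 i) ^+ 2.
Definition on_sphere (u : 'rV[R]_d) : Prop := dotv u u = 1.

Definition cost (tau : R) (z1 z2 : 'rV[R]_d) : R := - (dotv z1 z2 / tau).

Variables (P : probability (Rn R n) R) (f : Rn R n -> 'rV[R]_d).

Definition Ep (h : Rn R n -> R) : R := Rintegral P setT h.

Definition Zneg (t : R) (x : Rn R n) : R :=
  Ep (fun x' => expR (- t * sqdist (f x) (f x'))).

(* density of pi^-(. | x) with respect to p, i.e. pi^-(x^- | x) / p(x^-) *)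
Definition pi_ratio (t : R) (x xm : Rn R n) : R :=
  expR (- t * sqdist (f x) (f xm)) / Zneg t x.

(* E_{x^- ~ pi^-(.|x)}[h x^-] = E_{x^- ~ p}[(pi^-/p)(x^-) h x^-] *)
Definition Epi (t : R) (x : Rn R n) (h : Rn R n -> R) : R :=
  Ep (fun xm => pi_ratio t x xm * h xm).

Definition MI (t : R) : R :=
  Ep (fun x => Epi t x (fun xm => ln (pi_ratio t x xm))).

Definition L_CR (tau t : R) : R :=
  Ep (fun x => Epi t x (fun xm => - cost tau (f x) (f xm))).

Definition L_uniform (tau : R) : R :=
  Ep (fun x => ln (Ep (fun xm => expR (dotv (f xm) (f x) / tau)))).

End defs.

From HB Require Import structures.
From mathcomp Require Import all_boot all_order all_algebra.
From mathcomp Require Import all_classical all_reals all_analysis.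
From mathcomp Require Import measurable_realfun.
From mathcomp Require Import ring lra.
Import numFieldTopology.Exports.
Import Order.TTheory GRing.Theory Num.Theory.
Local Open Scope ring_scope.

(* Fix a query x and put q := pi^-(. | x) / p and G(y) := f(x)^T f(y) / tau.
   Applying 1 + v <= e^v to v := G - ln q - ln E_p[e^G], multiplying by q and
   integrating against p gives the Gibbs variational inequality
   E_p[q G] <= ln E_p[e^G] + E_p[q ln q], i.e.
   -E_{pi^-}[c(f x, .)] <= ln E_p[e^{f^T f(x) / tau}] + KL(pi^-(. | x) || p).
   Averaging over x ~ p turns this into L_CR <= L_uniform + I(X; X^-).
   Because f takes values in the unit sphere, every integrand is bounded and
   every density is bounded away from 0, so all the expectations exist; the
   measurability in x of the inner expectations comes from Tonelli. *)

Section bounded_measurable.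
Context {R : realType} {d : measure_display} {T : measurableType d}.
Implicit Types g h : T -> R.

Definition bounded_measurable g :=
  measurable_fun setT g /\ exists M : R, forall z, `|g z| <= M.

Lemma bounded_measurable_cst c : bounded_measurable (fun=> c).
Proof. by split; [exact: measurable_cst | exists `|c|]. Qed.

Lemma bounded_measurableD {g h} :
  bounded_measurable g -> bounded_measurable h ->
  bounded_measurable (fun z => g z + h z).
Proof.
move=> [mg [M gM]] [mh [N hN]]; split; first exact: measurable_funD.
by exists (M + N) => z; rewrite (le_trans (ler_normD _ _))// lerD.
Qed.

Lemma bounded_measurableN {g} : bounded_measurable g ->
  bounded_measurable (fun z => - g z).
Proof.
move=> [mg [M gM]]; split; first exact: measurable_funN.
by exists M => z; rewrite normrN.
Qed.

Lemma bounded_measurableB {g h} :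
  bounded_measurable g -> bounded_measurable h ->
  bounded_measurable (fun z => g z - h z).
Proof.
by move=> bg bh; exact: bounded_measurableD bg (bounded_measurableN bh).
Qed.

Lemma bounded_measurableM {g h} :
  bounded_measurable g -> bounded_measurable h ->
  bounded_measurable (fun z => g z * h z).
Proof.
move=> [mg [M gM]] [mh [N hN]]; split; first exact: measurable_funM.
by exists (M * N) => z; rewrite normrM ler_pM.
Qed.

Lemma bounded_measurable_expR {g} : bounded_measurable g ->
  bounded_measurable (fun z => expR (g z)).
Proof.
move=> [mg [M gM]]; split; first exact: measurableT_comp mg.
exists (expR M) => z; rewrite ger0_norm ?expR_ge0// ler_expR.
exact: le_trans (ler_norm _) (gM z).
Qed.

Lemma bounded_measurable_ln {g c} : 0 < c -> (forall z, c <= g z) ->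
  bounded_measurable g -> bounded_measurable (fun z => ln (g z)).
Proof.
move=> c0 cg [mg [M gM]].
split; first exact: measurableT_comp (@measurable_ln R) mg.
exists (`|ln c| + `|ln M|) => z.
have gz0 : 0 < g z by exact: lt_le_trans (cg z).
have gzM : g z <= M by exact: le_trans (ler_norm _) (gM z).
have lnc : ln c <= ln (g z) by rewrite ler_ln ?posrE.
have lnM : ln (g z) <= ln M by rewrite ler_ln ?posrE ?(lt_le_trans gz0).
have := ler_norm (ln M); have := ler_norm (- ln c); rewrite normrN.
have := normr_ge0 (ln c); have := normr_ge0 (ln M).
by rewrite ler_norml => *; apply/andP; split; lra.
Qed.

End bounded_measurable.

#[local] Hint Resolve bounded_measurable_cst bounded_measurableD
  bounded_measurableN bounded_measurableB bounded_measurableM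
  bounded_measurable_expR : core.

Lemma bounded_measurable_comp {R : realType} {d d' : measure_display}
    {T : measurableType d} {T' : measurableType d'} {k : T' -> T} {g : T -> R} :
  measurable_fun setT k -> bounded_measurable g ->
  bounded_measurable (fun z => g (k z)).
Proof.
move=> mk [mg [M gM]]; split; last by exists M.
exact: measurableT_comp mg mk.
Qed.

Lemma bounded_measurable_pair1 {R : realType} {d d' : measure_display}
    {T : measurableType d} {T' : measurableType d'} {g : T * T' -> R} x :
  bounded_measurable g -> bounded_measurable (fun y => g (x, y)).
Proof. exact: bounded_measurable_comp (measurable_pair1 x). Qed.

Lemma bounded_measurable_integrable {R : realType} {d : measure_display}
    {T : measurableType d} (P : probability T R) (h : T -> R) :
  bounded_measurable h -> P.-integrable setT (EFin \o h).
Proof.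
move=> [mh [M hM]].
apply: (@le_integrable _ _ _ P setT measurableT _ (EFin \o cst M)).
- exact/measurable_EFinP.
- by move=> x _ /=; rewrite lee_fin (le_trans (hM x)) ?ler_norm.
- exact: finite_measure_integrable_cst.
Qed.

#[local] Hint Extern 1 (is_true (_.-integrable _ _)) =>
  apply: bounded_measurable_integrable : core.

Section probability_Rintegral.
Context {R : realType} {d : measure_display} {T : measurableType d}.
Variable P : probability T R.
Implicit Types (h : T -> R) (c : R).

Lemma Rintegral_prob_cst c : \int[P]_x c = c.
Proof.
by rewrite Rintegral_cst// (congr1 fine (probability_setT P)) mulr1.
Qed.

Lemma Rintegral_prob_ge h c : bounded_measurable h -> (forall x, c <= h x) ->
  c <= \int[P]_x h x.
Proof.
by move=> bh ch; rewrite -[leLHS]Rintegral_prob_cst; apply: le_Rintegral; auto.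
Qed.

Lemma Rintegral_prob_le h c : bounded_measurable h -> (forall x, h x <= c) ->
  \int[P]_x h x <= c.
Proof.
by move=> bh hc; rewrite -[leRHS]Rintegral_prob_cst; apply: le_Rintegral; auto.
Qed.

Lemma bounded_measurable_Rintegral {d'} {T' : measurableType d'}
    (g : T' * T -> R) :
  bounded_measurable g -> bounded_measurable (fun x => \int[P]_y g (x, y)).
Proof.
move=> bg; have [mg [M gM]] := bg.
have bgx x := bounded_measurable_pair1 x bg.
have gM' z : - M <= g z <= M by rewrite -ler_norml.
split; last first.
  exists M => x; rewrite ler_norml; apply/andP; split.
  - by apply: Rintegral_prob_ge => // y; case/andP: (gM' (x, y)).
  - by apply: Rintegral_prob_le => // y; case/andP: (gM' (x, y)).
(* shifting by [M] makes the integrand nonnegative, so Tonelli applies *)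
have shiftE x : \int[P]_y g (x, y) =
    fine (fubini_F P (fun z => (g z + M)%:E) x) - M.
  rewrite -[X in _ - X](Rintegral_prob_cst M) -RintegralB; try by auto.
  by apply: eq_Rintegral => y _; rewrite addrK.
rewrite (funext shiftE); apply: measurable_funB; last exact: measurable_cst.
apply: measurableT_comp => //; apply: measurable_fun_fubini_tonelli_F.
- exact/measurable_EFinP/measurable_funD/measurable_cst.
- by move=> z; rewrite lee_fin -lerBlDr sub0r; case/andP: (gM' z).
Qed.

Lemma Rintegral_expR_ge {G : T -> R} {M : R} : measurable_fun setT G ->
  (forall y, `|G y| <= M) -> expR (- M) <= \int[P]_y expR (G y).
Proof.
move=> mG GM; apply: Rintegral_prob_ge => [|y].
  by apply: bounded_measurable_expR; split => //; exists M.
by have := GM y; rewrite ler_norml ler_expR => /andP[].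
Qed.

Lemma Rintegral_expR_gt0 {G : T -> R} : bounded_measurable G ->
  0 < \int[P]_y expR (G y).
Proof.
move=> [mG [M GM]].
exact: lt_le_trans (expR_gt0 _) (Rintegral_expR_ge mG GM).
Qed.

Lemma bounded_measurable_ln_Rintegral_expR {d'} {T' : measurableType d'}
    (g : T' * T -> R) : bounded_measurable g ->
  bounded_measurable (fun x => ln (\int[P]_y expR (g (x, y)))).
Proof.
move=> bg; have [mg [M gM]] := bg.
apply: (bounded_measurable_ln (expR_gt0 (- M))) => [x|].
  exact: Rintegral_expR_ge (measurableT_comp mg (measurable_pair1 x))
    (fun y => gM (x, y)).
by apply: (bounded_measurable_Rintegral (fun z => expR (g z))); auto.
Qed.

Lemma gibbs_variational_le (q G : T -> R) :
  (forall y, 0 < q y) -> \int[P]_y q y = 1 ->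
  bounded_measurable q -> bounded_measurable (fun y => ln (q y)) ->
  bounded_measurable G ->
  \int[P]_y (q y * G y) <=
  ln (\int[P]_y expR (G y)) + \int[P]_y (q y * ln (q y)).
Proof.
move=> q_gt0 q1 bq blnq bG.
set W := \int[P]_y expR (G y).
have W_gt0 : 0 < W := Rintegral_expR_gt0 bG.
have pointwise y : q y * (G y - ln (q y) - ln W) <= expR (G y) / W - q y.
  have := expR_ge1Dx (G y - ln (q y) - ln W).
  rewrite -(ler_pM2l (q_gt0 y)) mulrDr mulr1 !expRB !lnK ?posrE//.
  have -> : q y * (expR (G y) / q y / W) = expR (G y) / W.
    by field; rewrite !gt_eqF.
  lra.
have : \int[P]_y (q y * G y - q y * ln (q y) - q y * ln W) <=
       \int[P]_y (expR (G y) / W - q y).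
  apply: le_Rintegral => // [||y _]; [auto 6|auto|].
  by rewrite -!mulrBr pointwise.
rewrite !RintegralB ?RintegralZr ?q1 -?/W ?divff ?gt_eqF//; try by auto 6.
by rewrite mul1r subrr; lra.
Qed.

End probability_Rintegral.

Section sphere.
Context {R : realType} {d : nat}.
Implicit Types u v : 'rV[R]_d.

Lemma dotvC u v : dotv u v = dotv v u.
Proof. by apply: eq_bigr => i _; rewrite mulrC. Qed.

Lemma sqdistE u v : sqdist u v = dotv u u + dotv v v - 2 * dotv u v.
Proof.
rewrite /sqdist /dotv mulr_sumr -big_split -sumrB /=.
by apply: eq_bigr => i _; rewrite sqrrB; ring.
Qed.

Lemma sqdist_sphere {u v} : on_sphere u -> on_sphere v ->
  sqdist u v = 2 - 2 * dotv u v.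
Proof. by move=> su sv; rewrite sqdistE su sv. Qed.

Lemma dotv_sphere_le1 {u v} : on_sphere u -> on_sphere v -> `|dotv u v| <= 1.
Proof.
move=> su sv; have : 0 <= sqdist u v by apply: sumr_ge0 => i _; exact: sqr_ge0.
rewrite sqdist_sphere//.
have sum_sqrD : \sum_(i < d) (u 0 i + v 0 i) ^+ 2 =
    dotv u u + dotv v v + 2 * dotv u v.
  rewrite /dotv mulr_sumr -!big_split /=.
  by apply: eq_bigr => i _; rewrite sqrrD; ring.
have : 0 <= \sum_(i < d) (u 0 i + v 0 i) ^+ 2.
  by apply: sumr_ge0 => i _; exact: sqr_ge0.
by rewrite sum_sqrD su sv ler_norml => *; apply/andP; split; lra.
Qed.

End sphere.

Section contrastive.
Context {R : realType} {n d : nat} {P : probability (Rn R n) R}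
  {f : Rn R n -> 'rV[R]_d}.
Hypothesis mf : forall i : 'I_d, measurable_fun setT (fun x => f x 0 i).
Hypothesis sph : forall x, on_sphere (f x).
Local Notation T := (Rn R n).

Lemma bounded_measurable_dotv :
  bounded_measurable (fun z : T * T => dotv (f z.1) (f z.2)).
Proof.
split; last by exists 1 => z; exact: dotv_sphere_le1 (sph _) (sph _).
apply: measurable_sum => i; apply: measurable_funM.
- exact: measurableT_comp (mf i) measurable_fst.
- exact: measurableT_comp (mf i) measurable_snd.
Qed.

Lemma bounded_measurable_sqdist :
  bounded_measurable (fun z : T * T => sqdist (f z.1) (f z.2)).
Proof.
rewrite (_ : (fun z => _) = (fun z => 2 - 2 * dotv (f z.1) (f z.2))).
  by auto using bounded_measurable_dotv.
by apply/funext => z; rewrite sqdist_sphere.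
Qed.

Lemma bounded_measurable_ln_Ep_expR_dotv tau : bounded_measurable
  (fun x : T => ln (Ep P (fun y => expR (dotv (f y) (f x) / tau)))).
Proof.
apply: (bounded_measurable_ln_Rintegral_expR P
  (fun z => dotv (f z.2) (f z.1) / tau)).
under eq_fun do rewrite dotvC.
by auto using bounded_measurable_dotv.
Qed.

Variable t : R.

Lemma Zneg_gt0 x : 0 < Zneg P f t x.
Proof.
apply/Rintegral_expR_gt0/(bounded_measurable_pair1 x
  (g := fun z : T * T => - t * sqdist (f z.1) (f z.2))).
by auto using bounded_measurable_sqdist.
Qed.

Lemma pi_ratioE x y : pi_ratio P f t x y =
  expR (- t * sqdist (f x) (f y) - ln (Zneg P f t x)).
Proof. by rewrite expRB lnK// posrE Zneg_gt0. Qed.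

Lemma bounded_measurable_log_pi_ratio : bounded_measurable
  (fun z : T * T => - t * sqdist (f z.1) (f z.2) - ln (Zneg P f t z.1)).
Proof.
apply: bounded_measurableB; first by auto using bounded_measurable_sqdist.
apply: (bounded_measurable_comp (g := fun x => ln (Zneg P f t x))
  measurable_fst).
apply: (bounded_measurable_ln_Rintegral_expR P
  (fun z => - t * sqdist (f z.1) (f z.2))).
by auto using bounded_measurable_sqdist.
Qed.

Lemma bounded_measurable_pi_ratio :
  bounded_measurable (fun z : T * T => pi_ratio P f t z.1 z.2).
Proof.
rewrite (_ : (fun z => _) = (fun z => expR (- t * sqdist (f z.1) (f z.2)
                                              - ln (Zneg P f t z.1)))).
  exact/bounded_measurable_expR/bounded_measurable_log_pi_ratio.
by apply/funext => z; rewrite pi_ratioE.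
Qed.

Lemma bounded_measurable_ln_pi_ratio :
  bounded_measurable (fun z : T * T => ln (pi_ratio P f t z.1 z.2)).
Proof.
rewrite (_ : (fun z => _) = (fun z => - t * sqdist (f z.1) (f z.2)
                                       - ln (Zneg P f t z.1))).
  exact: bounded_measurable_log_pi_ratio.
by apply/funext => z; rewrite pi_ratioE expRK.
Qed.

Lemma Rintegral_pi_ratio x : \int[P]_y pi_ratio P f t x y = 1.
Proof.
rewrite RintegralZr ?divff ?gt_eqF ?Zneg_gt0//.
apply/bounded_measurable_integrable/(bounded_measurable_pair1 x
  (g := fun z : T * T => expR (- t * sqdist (f z.1) (f z.2)))).
by auto using bounded_measurable_sqdist.
Qed.

Lemma bounded_measurable_Epi (h : T * T -> R) : bounded_measurable h ->
  bounded_measurable (fun x => Epi P f t x (fun y => h (x, y))).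
Proof.
move=> bh; apply: (bounded_measurable_Rintegral P
  (fun z => pi_ratio P f t z.1 z.2 * h z)).
by auto using bounded_measurable_pi_ratio.
Qed.

Lemma bounded_measurable_Epi_neg_cost tau : bounded_measurable
  (fun x : T => Epi P f t x (fun y => - cost tau (f x) (f y))).
Proof.
apply: (bounded_measurable_Epi (fun z => - cost tau (f z.1) (f z.2))).
by rewrite /cost; auto using bounded_measurable_dotv.
Qed.

Lemma bounded_measurable_Epi_ln_pi_ratio : bounded_measurable
  (fun x : T => Epi P f t x (fun y => ln (pi_ratio P f t x y))).
Proof.
exact: (bounded_measurable_Epi (fun z => ln (pi_ratio P f t z.1 z.2))
  bounded_measurable_ln_pi_ratio).
Qed.

Lemma Epi_neg_cost_le tau x :
  Epi P f t x (fun y => - cost tau (f x) (f y)) <=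
  ln (Ep P (fun y => expR (dotv (f y) (f x) / tau))) +
  Epi P f t x (fun y => ln (pi_ratio P f t x y)).
Proof.
rewrite /Epi /Ep /cost; under eq_Rintegral do rewrite opprK.
under [in ln _]eq_Rintegral do rewrite dotvC.
apply: gibbs_variational_le.
- by move=> y; rewrite pi_ratioE expR_gt0.
- exact: Rintegral_pi_ratio.
- exact: bounded_measurable_pair1 x bounded_measurable_pi_ratio.
- exact: bounded_measurable_pair1 x bounded_measurable_ln_pi_ratio.
- apply: (bounded_measurable_pair1 x
    (g := fun z : T * T => dotv (f z.1) (f z.2) / tau)).
  by auto using bounded_measurable_dotv.
Qed.

End contrastive.

Theorem lemma3 (R : realType) (n d : nat) (P : probability (Rn R n) R)
  (f : Rn R n -> 'rV[R]_d) (tau tm : R) :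
  (forall i : 'I_d, measurable_fun setT (fun x : Rn R n => f x 0 i)) ->
  (forall x, on_sphere (f x)) ->
  0 < tau -> 0 < tm ->
  L_uniform P f tau + MI P f tm >= L_CR P f tau tm.
Proof.
move=> mf sph _ _.
have b_CR := bounded_measurable_Epi_neg_cost (P := P) mf sph tm tau.
have b_MI := bounded_measurable_Epi_ln_pi_ratio (P := P) mf sph tm.
have b_uniform := bounded_measurable_ln_Ep_expR_dotv (P := P) mf sph tau.
rewrite /L_CR /L_uniform /MI -RintegralD//; try by auto.
apply: le_Rintegral => //; try by auto.
by move=> x _; exact: Epi_neg_cost_le.
Qed.
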